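(* Let $\mathbb{K}$ be a topological field, $d\in\mathbb{N}$, $F$ a topological $\mathbb{K}$-vector space, $U\subseteq\mathbb{K}^d$ open or of the form $U_1\times\cdots\times U_d$ with $U_i\subseteq\mathbb{K}$ having dense interior, and $f\colon U\to F$. If $f$ is $C^k_{SDS}$ for some $k\in\mathbb{N}_0$ (resp., if $\mathbb{K}$ is a valued field and $f$ is $C^{k,\sigma}_{SDS}$ for some $\sigma>0$), then for each $\alpha\in\mathbb{N}_0^d$ with $|\alpha|\le k$ the map $f^{<\alpha>}\colon U^{<\alpha>}\to F$ is $C^{k-|\alpha|}_{SDS}$ (resp., $C^{k-|\alpha|,\sigma}_{SDS}$).
   Context: Topological fields are Hausdorff and non-discrete; vector spaces Hausdorff; valued field: absolute value defining a non-discrete topology. For $\alpha\in\mathbb{N}_0^d$, $|\alpha|=\sum\alpha_i$; write $x\in\mathbb{K}^{d+|\alpha|}$ as $(x^{(1)},\ldots,x^{(d)})$, $x^{(i)}=(x^{(i)}_0,\ldots,x^{(i)}_{\alpha_i})$. $U^{<\alpha>}$: set of $x$ with $(x^{(1)}_{i_1},\ldots,x^{(d)}_{i_d})\in U$ for all $0\le i_\ell\le\alpha_\ell$ (this is open, resp. a product of sets with dense interior, in $\mathbb{K}^{d+|\alpha|}$, so the same definitions apply to maps on it with $d$ replaced by $d+|\alpha|$); $U^{>\alpha<}$: those $x$ whose entries within each block $x^{(i)}$ are pairwise distinct. $f^{>0<}=f$ and $f^{>\alpha<}(x)=\sum_{j_1=0}^{\alpha_1}\cdots\sum_{j_d=0}^{\alpha_d}\big(\prod_{\ell=1}^d\prod_{k_\ell\neq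 j_\ell}(x^{(\ell)}_{j_\ell}-x^{(\ell)}_{k_\ell})^{-1}\big)f(x^{(1)}_{j_1},\ldots,x^{(d)}_{j_d})$. $f$ is $C^0_{SDS}$ if continuous ($f^{<0>}=f$); $C^k_{SDS}$ if $C^{k-1}_{SDS}$ and for all $|\alpha|=k$, $f^{>\alpha<}$ extends continuously to $f^{<\alpha>}\colon U^{<\alpha>}\to F$. Gauge on a vector space $E$ over a valued field: $q\colon E\to[0,\infty[$, $q(tx)=|t|q(x)$, each $\{q<r\}$ a $0$-neighbourhood. $g$ on $V\subseteq E$ is $C^{0,\sigma}$ if for each $x_0\in V$ and gauge $q$ on $F$ there are a gauge $p$ on $E$ and a neighbourhood $W$ of $x_0$ in $V$ with $q(g(y)-g(x))\le p(y-x)^\sigma$ for $x,y\in W$. $C^{k,\sigma}_{SDS}$: $C^k_{SDS}$ with each $f^{<\alpha>}$, $|\alpha|\le k$, $C^{0,\sigma}$. *)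

From HB Require Import structures.
From mathcomp Require Import all_boot all_order all_algebra.
From mathcomp Require Import all_classical reals.
From mathcomp Require Import topology_structure product_topology matrix_topology.
From mathcomp Require Import separation_axioms subspace_topology.

Set Implicit Arguments.
Unset Strict Implicit.
Unset Printing Implicit Defensive.

Import Order.TTheory GRing.Theory Num.Theory.
Local Open Scope classical_set_scope.
Local Open Scope ring_scope.

(** A field carrying a topology (axioms of a topological field are stated
    separately in [is_topological_field]). *)
HB.structure Definition TopField := {K of GRing.Field K & Topological K}.
Notation topFieldType := TopField.type.

From mathcomp Require Import exp.

Definition is_topological_field (K : topFieldType) : Prop :=
  [/\ hausdorff_space K,
      ~ (forall A : set K, open A),
      continuous (fun p : K * K => p.1 + p.2) /\
      continuous (fun p : K * K => p.1 * p.2),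
      continuous (fun x : K => - x) &
      forall x : K, x != 0 -> {for x, continuous (fun y : K => y^-1)}].

Definition topF (K : fieldType) (F : lmodType K) (tF : Topological.axioms_ F)
  : topologicalType := Topological.Pack tF.

Definition is_tvs (K : topFieldType) (F : lmodType K)
    (tF : Topological.axioms_ F) : Prop :=
  [/\ hausdorff_space (topF tF),
      continuous (fun p : topF tF * topF tF => (p.1 + p.2 : topF tF)) &
      continuous (fun p : K * topF tF => (p.1 *: p.2 : topF tF))].

Definition is_valued (K : topFieldType) (R : realType) (av : K -> R) : Prop :=
  [/\ forall x, 0 <= av x,
      forall x, av x = 0 <-> x = 0,
      forall x y, av (x * y) = av x * av y,
      forall x y, av (x + y) <= av x + av y &
      forall (x : K) (A : set K),
        nbhs x A <-> exists e : R, 0 < e /\ [set y | av (y - x) < e] `<=` A].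

Section SDS.
Variables (K : topFieldType) (F : lmodType K) (tF : Topological.axioms_ F).
Local Notation TF := (topF tF).

(** K^n is represented by row vectors 'rV[K]_n with the product topology. *)

Section Blocks.
Variables (n : nat) (alpha : 'I_n -> nat).

Definition absa : nat := \sum_(i < n) alpha i.

(** n + |alpha|, written as the number of entries of all blocks. *)
Definition dimA : nat := \sum_(i < n) (alpha i).+1.

Lemma blk_lt (i : 'I_n) (j : 'I_(alpha i).+1) :
  (\sum_(l < n | (l < i)%N) (alpha l).+1 + j < dimA)%N.
Proof.
rewrite /dimA [X in (_ < X)%N](bigID (fun l : 'I_n => (l < i)%N)) /= ltn_add2l.
rewrite (bigD1 i) ?ltnn //=.
exact: leq_trans (ltn_ord j) (leq_addr _ _).
Qed.

(** position of x^{(i)}_j in x \in K^{n+|alpha|} *)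
Definition blk (i : 'I_n) (j : 'I_(alpha i).+1) : 'I_dimA := Ordinal (blk_lt j).

Definition ent (x : 'rV[K]_dimA) (i : 'I_n) (j : 'I_(alpha i).+1) : K :=
  x ord0 (blk j).

Definition Usub (U : set 'rV[K]_n) : set 'rV[K]_dimA :=
  [set x | forall t : (forall i : 'I_n, 'I_(alpha i).+1),
             U (\row_(i < n) ent x (t i))].

Definition Udist (U : set 'rV[K]_n) : set 'rV[K]_dimA :=
  [set x | Usub U x /\
     forall (i : 'I_n) (j j' : 'I_(alpha i).+1), j != j' -> ent x j != ent x j'].

Definition sds (f : 'rV[K]_n -> F) (x : 'rV[K]_dimA) : F :=
  \sum_(t : {dffun forall i : 'I_n, 'I_(alpha i).+1})
     (\prod_(l < n) \prod_(k < (alpha l).+1 | k != t l)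
         (ent x (t l) - ent x k)^-1)
     *: f (\row_(l < n) ent x (t l)).

(** g is a continuous extension of f^{>alpha<} to U^{<alpha>}, i.e.
    g is (a representative of) f^{<alpha>} *)
Definition is_ext (U : set 'rV[K]_n) (f : 'rV[K]_n -> F)
    (g : 'rV[K]_dimA -> F) : Prop :=
  {within Usub U, continuous (g : _ -> TF)} /\ forall x, Udist U x -> g x = sds f x.

End Blocks.

Arguments Usub {n} alpha U _.
Arguments Udist {n} alpha U _.
Arguments sds {n} alpha f x.
Arguments is_ext {n} alpha U f g.

Fixpoint CSDS (k : nat) (n : nat) (U : set 'rV[K]_n) (f : 'rV[K]_n -> F)
    : Prop :=
  match k with
  | 0 => {within U, continuous (f : _ -> TF)}
  | k'.+1 => CSDS k' U f /\
      forall alpha : 'I_n -> nat, absa alpha = k'.+1 ->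
        exists g, is_ext alpha U f g
  end.

Section Holder.
Variables (R : realType) (av : K -> R).

Definition gauge (E : lmodType K) (nb0 : set_system E) (q : E -> R) : Prop :=
  [/\ forall x, 0 <= q x,
      forall (t : K) (x : E), q (t *: x) = av t * q x &
      forall r : R, 0 < r -> nb0 [set x | q x < r]].

Definition C0s (m : nat) (V : set 'rV[K]_m) (g : 'rV[K]_m -> F) (sigma : R)
    : Prop :=
  forall x0, V x0 -> forall q : F -> R, gauge (nbhs (0 : TF)) q ->
    exists p : 'rV[K]_m -> R, gauge (nbhs (0 : 'rV[K]_m)) p /\
      exists N : set 'rV[K]_m, nbhs x0 N /\
        forall x y, V x -> V y -> N x -> N y ->
          q (g y - g x) <= p (y - x) `^ sigma.

Definition CSDSs (k : nat) (sigma : R) (n : nat) (U : set 'rV[K]_n)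
    (f : 'rV[K]_n -> F) : Prop :=
  CSDS k U f /\
  forall alpha : 'I_n -> nat, (absa alpha <= k)%N ->
    forall g, is_ext alpha U f g -> C0s (Usub alpha U) g sigma.

End Holder.
End SDS.

Arguments Usub {K n} alpha U _.
Arguments Udist {K n} alpha U _.
Arguments is_ext {K F} tF {n} alpha U f g.

Definition admissible_domain (K : topFieldType) (d : nat) (U : set 'rV[K]_d)
    : Prop :=
  open U \/
  exists Ui : 'I_d -> set K,
    (forall i, Ui i `<=` closure (interior (Ui i))) /\
    U = [set x | forall i, Ui i (x ord0 i)].

From HB Require Import structures.
From mathcomp Require Import all_boot all_order all_algebra.
From mathcomp Require Import all_classical reals.
From mathcomp Require Import topology_structure product_topology matrix_topology.
From mathcomp Require Import separation_axioms subspace_topology exp.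
From mathcomp Require Import zify ring.
Import Order.TTheory GRing.Theory Num.Theory.
Local Open Scope classical_set_scope.
Local Open Scope ring_scope.

Set Implicit Arguments.
Unset Strict Implicit.
Unset Printing Implicit Defensive.

(* Writing a point of K^(n+|alpha|) as blocks, f^{>alpha<} is a sum over the
   sections c (one entry chosen in each block) of the weight
   prod_l prod_{a in block l, a <> c l} (x_(c l) - x_a)^-1 times f at the chosen
   entries.  For beta indexing the entries of U^{<alpha>}, the composite
   (f^{>alpha<})^{>beta<} at a point y with pairwise distinct entries is
   f^{>gamma<}(y), where gamma_l + 1 is the total size of the beta-blocks inside
   the l-th alpha-block and y is read as a point of K^(d+|gamma|): grouping the
   pairs (beta-section, alpha-section) by the gamma-section they compose to, the
   weights collapse block by block through the partial-fraction identity
   sum_i prod_{k <> i} (z_i - z_k)^-1 (a - z_i)^-1 = prod_i (a - z_i)^-1.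
   Hence f^{<gamma>} after this reindexing extends (f^{<alpha>})^{>beta<}
   continuously, and it is the only continuous extension, since points with
   pairwise distinct entries are dense in U^{<alpha><beta>} (K is Hausdorff and
   non-discrete, U is open or a product of sets with dense interior).  As
   |gamma| = |alpha| + |beta|, this gives C^{k-|alpha|}; Hoelder estimates pass
   through the reindexing, which is a coordinate selection. *)

(** * Blocks *)

Section BlockIndex.
Variables (n : nat) (alpha : 'I_n -> nat).

Definition blk_off (x : nat) : nat := (\sum_(l < n | (l < x)%N) (alpha l).+1)%N.

Lemma val_blk (i : 'I_n) (j : 'I_(alpha i).+1) : val (blk j) = (blk_off i + j)%N.
Proof. by []. Qed.

Lemma blk_off0 : blk_off 0 = 0%N.
Proof. by rewrite /blk_off big_pred0. Qed.

Lemma blk_offS (l : 'I_n) : blk_off l.+1 = (blk_off l + (alpha l).+1)%N.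
Proof.
rewrite /blk_off (bigD1 l) //= addnC; congr (_ + _)%N.
by apply: eq_bigl => i; rewrite ltnS ltn_neqAle andbC.
Qed.

Lemma blk_off_dimA : blk_off n = dimA alpha.
Proof. by apply: eq_bigl => i; rewrite ltn_ord. Qed.

Lemma leq_blk_off : {homo blk_off : x y / (x <= y)%N}.
Proof.
move=> x y xy; rewrite /blk_off [leqRHS]big_mkcond [leqLHS]big_mkcond /=.
by apply: leq_sum => l _; case: ifP => // lx; rewrite (leq_trans lx xy).
Qed.

Lemma blk_off_split a b : (a <= b)%N ->
  blk_off b = (blk_off a + \sum_(i < n | (a <= i < b)%N) (alpha i).+1)%N.
Proof.
move=> ab; rewrite /blk_off (bigID (fun i : 'I_n => (i < a)%N)) /=; congr (_ + _)%N.
  by apply: eq_bigl => i; apply/andP/idP => [[]//|ia]; split=> //; apply: leq_trans ia ab.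
by apply: eq_bigl => i; rewrite -leqNgt andbC.
Qed.

Lemma blk_off_leq_dimA x : (blk_off x <= dimA alpha)%N.
Proof.
rewrite -blk_off_dimA; case: (leqP x n) => h; first exact: leq_blk_off.
by apply/eq_leq/eq_bigl => i; rewrite ltn_ord (leq_trans (ltn_ord i) (ltnW h)).
Qed.

Lemma dimA_absa : dimA alpha = (absa alpha + n)%N.
Proof.
rewrite /dimA /absa; under eq_bigr => i _ do rewrite -addn1.
by rewrite big_split /= sum1_card card_ord.
Qed.

Lemma exists_blk_of (p : 'I_(dimA alpha)) :
  exists l : 'I_n, (blk_off l <= p < blk_off l.+1)%N.
Proof.
suff: forall k, (k <= n)%N -> (p < blk_off k)%N ->
    exists l : 'I_n, (blk_off l <= p < blk_off l.+1)%N.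
  by move=> H; apply: (H n) => //; rewrite blk_off_dimA.
elim=> [|k IH] kn; first by rewrite blk_off0.
move=> pk; case: (leqP (blk_off k) p) => pk'.
  by exists (Ordinal kn); rewrite pk' pk.
by apply: IH => //; apply: ltnW.
Qed.

Definition blk_of (p : 'I_(dimA alpha)) : 'I_n := xchoose (exists_blk_of p).

Lemma blk_ofP p : (blk_off (blk_of p) <= p < blk_off (blk_of p).+1)%N.
Proof. exact: (xchooseP (exists_blk_of p)). Qed.

Lemma blk_ofE (p : 'I_(dimA alpha)) (l : 'I_n) :
  (blk_off l <= p < blk_off l.+1)%N -> blk_of p = l.
Proof.
move=> /andP[h1 h2]; have /andP[h3 h4] := blk_ofP p.
have lt_off (i i' : 'I_n) : (i < i')%N -> (blk_off i.+1 <= blk_off i')%N.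
  by move=> ?; apply: leq_blk_off.
case: (ltngtP (blk_of p) l) => h; last exact: val_inj.
- by have := lt_off _ _ h; move: h4 h1; lia.
- by have := lt_off _ _ h; move: h2 h3; lia.
Qed.

Lemma blk_of_blk (i : 'I_n) (j : 'I_(alpha i).+1) : blk_of (blk j) = i.
Proof. by apply: blk_ofE; rewrite val_blk blk_offS leq_addr /= ltn_add2l. Qed.

Lemma blk_inord (i : 'I_n) (p : 'I_(dimA alpha)) :
  blk_of p = i -> blk (inord (p - blk_off i) : 'I_(alpha i).+1) = p.
Proof.
move=> <-; have /andP[h1 h2] := blk_ofP p; rewrite blk_offS in h2.
by apply: val_inj; rewrite val_blk inordK ?subnKC //; move: h1 h2; lia.
Qed.

Lemma blk_inj (i : 'I_n) : injective (@blk n alpha i).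
Proof. by move=> j j' /(congr1 val); rewrite !val_blk => /addnI /val_inj. Qed.

Lemma inord_blk (i : 'I_n) (j : 'I_(alpha i).+1) :
  inord (blk j - blk_off i) = j.
Proof. by apply: val_inj => /=; rewrite addKn inordK. Qed.

End BlockIndex.

Arguments blk_of {n} alpha p.

(** * Divided differences over sections *)

Section Sections.
Variables (A L : finType) (lam : A -> L).

Definition is_section (c : {ffun L -> A}) : bool := [forall l, lam (c l) == l].

Lemma sectionP (c : {ffun L -> A}) : reflect (forall l, lam (c l) = l) (is_section c).
Proof. by apply: (iffP forallP) => h l; apply/eqP. Qed.

Lemma section_inj (c : {ffun L -> A}) : is_section c -> injective c.
Proof. by move=> /sectionP sc l l' e; rewrite -(sc l) -(sc l') e. Qed.

Definition dd_weight (K : fieldType) (x : A -> K) (c : {ffun L -> A}) : K :=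
  \prod_(l : L) \prod_(a | (lam a == l) && (a != c l)) (x (c l) - x a)^-1.

End Sections.

Definition divdiff (K : fieldType) (F : lmodType K) (A : finType) (d : nat)
    (lam : A -> 'I_d) (f : 'rV[K]_d -> F) (x : A -> K) : F :=
  \sum_(c | is_section lam c) dd_weight lam x c *: f (\row_l x (c l)).

Lemma sds_divdiff (K : topFieldType) (F : lmodType K) (n : nat)
    (alpha : 'I_n -> nat) (f : 'rV[K]_n -> F) (x : 'rV[K]_(dimA alpha)) :
  sds f x = divdiff (blk_of alpha) f (fun p => x ord0 p).
Proof.
pose h (t : {dffun forall i : 'I_n, 'I_(alpha i).+1}) :
  {ffun 'I_n -> 'I_(dimA alpha)} := [ffun l => blk (t l)].
pose h' (c : {ffun 'I_n -> 'I_(dimA alpha)}) :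
  {dffun forall i : 'I_n, 'I_(alpha i).+1} :=
  [ffun l => inord (c l - blk_off alpha l)].
rewrite /sds /divdiff (reindex_onto h h'); last first.
  by move=> c /sectionP sc; apply/ffunP => l; rewrite !ffunE blk_inord.
apply: eq_big => [t|t _].
  apply/esym/andP; split; first by apply/sectionP => l; rewrite ffunE blk_of_blk.
  by apply/eqP/ffunP => l; rewrite !ffunE inord_blk.
congr (_ *: f _); last by apply/rowP => l; rewrite !mxE ffunE.
apply: eq_bigr => l _; rewrite ffunE.
rewrite (reindex_onto (@blk n alpha l) (fun p => inord (p - blk_off alpha l)));
  last first.
  by move=> p /andP[/eqP lp _]; rewrite blk_inord.
apply: eq_big => // k.
by rewrite blk_of_blk eqxx (inj_eq (@blk_inj _ _ l)) inord_blk eqxx andbT.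
Qed.

Lemma divdiff_reindex (K : fieldType) (F : lmodType K) (A A' : finType) (d : nat)
    (phi : A' -> A) (lam : A -> 'I_d) (f : 'rV[K]_d -> F) (x : A -> K) :
  bijective phi ->
  divdiff (fun a => lam (phi a)) f (fun a => x (phi a)) = divdiff lam f x.
Proof.
move=> bij_phi; have [phi' phiK phiK'] := bij_phi.
have phi_inj := can_inj phiK.
pose h (c : {ffun 'I_d -> A'}) : {ffun 'I_d -> A} := [ffun l => phi (c l)].
have bij_h : bijective h.
  exists (fun c : {ffun 'I_d -> A} => [ffun l => phi' (c l)]) => c;
    by apply/ffunP => l; rewrite !ffunE.
rewrite /divdiff [RHS](reindex h); last exact: onW_bij.
apply: eq_big => [c|c _].
  by apply/sectionP/sectionP => sc l; have := sc l; rewrite ffunE.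
congr (_ *: f _); last by apply/rowP => l; rewrite !mxE ffunE.
apply: eq_bigr => l _; rewrite ffunE [RHS](reindex phi); last exact: onW_bij.
by apply: eq_bigl => a; rewrite (inj_eq phi_inj).
Qed.

(* The divided difference of [t |-> (a - t)^-1] at the nodes [z i], [i \in B]. *)
Lemma partial_fraction_prod (K : fieldType) (I : finType) (z : I -> K)
    (B : {set I}) (a : K) :
  injective z -> (0 < #|B|)%N -> (forall i, i \in B -> a != z i) ->
  \sum_(i in B) (\prod_(k in B | k != i) (z i - z k)^-1) * (a - z i)^-1
  = \prod_(i in B) (a - z i)^-1.
Proof.
move=> z_inj; move: {2}#|B| (erefl #|B|) => m.
elim: m B a => [|m IH] B a cB; first by rewrite cB.
move=> _ aB; have [b bB] : exists b, b \in B by apply/card_gt0P; rewrite cB.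
set B' := B :\ b.
have cB' : #|B'| = m by move: cB; rewrite (cardsD1 b B) bB => -[].
have B'B i : i \in B' -> i \in B by rewrite in_setD1 => /andP[].
have zbB' i : i \in B' -> z b != z i.
  by rewrite in_setD1 => /andP[ib _]; apply: contra ib => /eqP /z_inj ->.
have [m0 | m_gt0] := posnP m.
  have -> : B = [set b]%SET.
    by apply/esym/eqP; rewrite eqEcard finset.sub1set bB cards1 cB m0.
  by rewrite !big_set1 big_pred0 ?mul1r // => k; rewrite inE andbN.
have B'E (G : I -> K) : \prod_(k in B | k != b) G k = \prod_(k in B') G k.
  by apply: eq_bigl => k; rewrite in_setD1 andbC.
have ab : a - z b != 0 by rewrite subr_eq0 aB.
have split_i i : i \in B' ->
    (\prod_(k in B | k != i) (z i - z k)^-1) * (a - z i)^-1 =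
    (a - z b)^-1 * ((\prod_(k in B' | k != i) (z i - z k)^-1) * (a - z i)^-1
                    - (\prod_(k in B' | k != i) (z i - z k)^-1) * (z b - z i)^-1).
  move=> iB'; have i_b : i != b by move: iB'; rewrite in_setD1 => /andP[].
  rewrite (bigD1 b) /=; last by rewrite bB eq_sym.
  rewrite (eq_bigl (fun k => (k \in B') && (k != i))); last first.
    by move=> k; rewrite in_setD1; case: (k \in B); case: (k != i); case: (k != b).
  have ai : a - z i != 0 by rewrite subr_eq0 aB ?B'B.
  have bi : z b - z i != 0 by rewrite subr_eq0 zbB'.
  have ib : z i - z b != 0 by rewrite subr_eq0 eq_sym zbB'.
  by field; rewrite ai ib bi ab.
rewrite (bigD1 b) //= B'E [RHS](bigD1 b) //= B'E.
rewrite [X in _ + X](eq_bigl (fun i => i \in B')); last first.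
  by move=> k; rewrite in_setD1 andbC.
rewrite (eq_bigr _ split_i) -mulr_sumr sumrB IH ?(IH _ (z b)) ?cB' ?zbB' //.
  by rewrite mulrBr [_ / _]mulrC addrA addrAC subrr add0r.
by move=> i /B'B; apply: aB.
Qed.

Section DivdiffComp.
Variables (K : fieldType) (F : lmodType K) (R P : finType) (d : nat).
Variables (lam1 : R -> P) (lam2 : P -> 'I_d) (e : R -> K).
Hypothesis e_inj : injective e.
Hypothesis lam1_surj : forall p, exists r, lam1 r = p.

Section Weight.
Variable c : {ffun 'I_d -> R}.
Hypothesis c_section : is_section (fun r => lam2 (lam1 r)) c.

(* A pair (c1, c2) of sections composing to c has c2 = lam1 \o c, and c1 must
   pick c l in the "chosen" block lam1 (c l); the weight of such a pair splits
   over the blocks p of lam1 as the product of [factor p (c1 p)]. *)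
Let c2 : {ffun 'I_d -> P} := [ffun l => lam1 (c l)].
Let extends (c1 : {ffun P -> R}) :=
  is_section lam1 c1 && [forall l, c1 (lam1 (c l)) == c l].
Let chosen p := p == lam1 (c (lam2 p)).
Let admissible p r := (lam1 r == p) && (chosen p ==> (r == c (lam2 p))).
Let factor p r :=
  (\prod_(a | (lam1 a == p) && (a != r)) (e r - e a)^-1) *
  (if chosen p then 1 else (e (c (lam2 p)) - e r)^-1).

Lemma sum_comp_sections (W : {ffun P -> R} -> {ffun 'I_d -> P} -> K) :
  \sum_(pr : {ffun P -> R} * {ffun 'I_d -> P} |
      (is_section lam1 pr.1 && is_section lam2 pr.2) &&
      ([ffun l => pr.1 (pr.2 l)] == c)) W pr.1 pr.2
  = \sum_(c1 | extends c1) W c1 c2.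
Proof.
have /sectionP sc := c_section.
transitivity (\sum_(c1 | true) \sum_(c2' | (c2' == c2) && extends c1) W c1 c2').
  rewrite pair_big_dep; apply: eq_bigl => -[c1 c2'] /=.
  apply/andP/andP => [[/andP[sec1 _] /eqP cc] | [/eqP -> /andP[sec1 /forallP ext1]]].
    have c1c2' l : c1 (c2' l) = c l by rewrite -cc ffunE.
    have c2'E : c2' = c2.
      by apply/ffunP => l; rewrite ffunE -c1c2'; have /sectionP -> := sec1.
    split; first by rewrite c2'E.
    rewrite /extends sec1 /=; apply/forallP => l.
    by have := c1c2' l; rewrite c2'E /c2 ffunE => ->.
  split; first by rewrite sec1 /=; apply/sectionP => l; rewrite ffunE sc.
  by apply/eqP/ffunP => l; rewrite !ffunE (eqP (ext1 l)).
rewrite [RHS]big_mkcond; apply: eq_bigr => c1 _; case: ifP => ext1.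
  by rewrite (big_pred1 c2) // => c2'; rewrite andbT.
by rewrite big_pred0 // => c2'; rewrite andbF.
Qed.

Lemma weight_comp_factor c1 : extends c1 ->
  dd_weight lam1 e c1 * dd_weight lam2 (fun p => e (c1 p)) c2 =
  \prod_p factor p (c1 p).
Proof.
move=> /andP[_ /forallP ext1]; rewrite /factor big_split /=; congr (_ * _).
rewrite [RHS](partition_big lam2 predT) //= /dd_weight; apply: eq_bigr => l _.
rewrite ffunE (eqP (ext1 l)) big_mkcond [RHS]big_mkcond /=.
apply: eq_bigr => p _; case: eqP => [<-|//].
by rewrite /chosen; case: (p == lam1 (c (lam2 p))).
Qed.

Lemma extends_family c1 : extends c1 = (c1 \in family admissible).
Proof.
have /sectionP sc := c_section.
apply/idP/familyP => [/andP[/sectionP sec1 /forallP ext1] p | adm].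
  rewrite unfold_in /admissible sec1 eqxx /=; apply/implyP => /eqP pE.
  by rewrite {1}pE (eqP (ext1 _)).
apply/andP; split.
  by apply/sectionP => p; have := adm p; rewrite unfold_in => /andP[/eqP].
apply/forallP => l; have := adm (lam1 (c l)); rewrite unfold_in => /andP[_].
by rewrite /chosen sc eqxx.
Qed.

Lemma sum_factor p :
  \sum_(r | admissible p r) factor p r =
  \prod_(a | (lam1 a == p) && (a != c (lam2 p))) (e (c (lam2 p)) - e a)^-1.
Proof.
rewrite /factor /admissible; case: (boolP (chosen p)) => chp /=.
  rewrite (big_pred1 (c (lam2 p))) ?mulr1 // => r.
  apply/andP/eqP => [[_ /eqP //] | ->]; split => //.
  by move: chp; rewrite /chosen eq_sym.
set B := [set r | lam1 r == p]%SET.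
have B_gt0 : (0 < #|B|)%N.
  by have [r0 r0p] := lam1_surj p; apply/card_gt0P; exists r0; rewrite inE r0p.
have notB r : r \in B -> e (c (lam2 p)) != e r.
  rewrite inE => /eqP rp; apply/eqP => /e_inj cr.
  by move: chp; rewrite /chosen cr rp eqxx.
rewrite (eq_bigl (fun r => r \in B)); last by move=> r; rewrite inE andbT.
under eq_bigr => r rB.
  rewrite (eq_bigl (fun a => (a \in B) && (a != r))); last by move=> a; rewrite inE.
  over.
rewrite (partial_fraction_prod e_inj B_gt0 notB); apply: eq_bigl => a.
rewrite inE; case: eqP => //= ap; apply/esym/negP => /eqP ce.
by move: chp; rewrite /chosen -ce ap eqxx.
Qed.

Lemma dd_weight_comp :
  \sum_(pr : {ffun P -> R} * {ffun 'I_d -> P} |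
      (is_section lam1 pr.1 && is_section lam2 pr.2) &&
      ([ffun l => pr.1 (pr.2 l)] == c))
    dd_weight lam1 e pr.1 * dd_weight lam2 (fun p => e (pr.1 p)) pr.2
  = dd_weight (fun r => lam2 (lam1 r)) e c.
Proof.
rewrite (sum_comp_sections (fun c1 c2' =>
  dd_weight lam1 e c1 * dd_weight lam2 (fun p => e (c1 p)) c2')).
rewrite (eq_bigr _ weight_comp_factor) (eq_bigl _ _ extends_family).
rewrite -bigA_distr_big_dep (eq_bigr _ (fun p _ => sum_factor p)).
rewrite (partition_big lam2 predT) //= /dd_weight; apply: eq_bigr => l _.
rewrite (partition_big lam1 (fun p => lam2 p == l)) => [|a /andP[/eqP <-]] //.
apply: eq_bigr => p /eqP pl; rewrite pl; apply: eq_bigl => a.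
by case: (lam1 a =P p) => [->|_]; rewrite ?pl ?eqxx ?andbT ?andbF.
Qed.

End Weight.

Lemma divdiff_comp (f : 'rV[K]_d -> F) :
  \sum_(c1 | is_section lam1 c1)
     dd_weight lam1 e c1 *: divdiff lam2 f (fun p => e (c1 p))
  = divdiff (fun r => lam2 (lam1 r)) f e.
Proof.
rewrite /divdiff; under eq_bigr => c1 _ do rewrite scaler_sumr.
rewrite pair_big_dep /= (partition_big (fun pr : {ffun P -> R} * {ffun 'I_d -> P} =>
   [ffun l => pr.1 (pr.2 l)]) (is_section (fun r => lam2 (lam1 r)))); last first.
  move=> [c1 c2] /= /andP[/sectionP s1 /sectionP s2]; apply/sectionP => l.
  by rewrite ffunE s1 s2.
apply: eq_bigr => c sc.
rewrite (eq_bigr (fun pr => (dd_weight lam1 e pr.1 *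
    dd_weight lam2 (fun p => e (pr.1 p)) pr.2) *: f (\row_l e (c l)))); last first.
  move=> [c1 c2] /= /andP[_ /eqP <-]; rewrite scalerA; congr (_ *: f _).
  by apply/rowP => l; rewrite !mxE ffunE.
by rewrite -scaler_suml dd_weight_comp.
Qed.

End DivdiffComp.

(** * The fused multi-index *)

Section Fuse.
Variables (d : nat) (alpha : 'I_d -> nat) (beta : 'I_(dimA alpha) -> nat).

Definition fuse (l : 'I_d) : nat :=
  (\sum_(i < dimA alpha | (blk_off alpha l <= i < blk_off alpha l.+1)%N)
     (beta i).+1).-1.

Lemma fuseS l : (fuse l).+1 =
  (\sum_(i < dimA alpha | (blk_off alpha l <= i < blk_off alpha l.+1)%N)
     (beta i).+1)%N.
Proof.
have off_lt : (blk_off alpha l < dimA alpha)%N.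
  apply: leq_trans (blk_off_leq_dimA alpha l.+1).
  by rewrite blk_offS addnS ltnS leq_addr.
rewrite /fuse prednK // (bigD1 (Ordinal off_lt)) /=; first by rewrite addSn.
by rewrite leqnn blk_offS addnS ltnS leq_addr.
Qed.

Lemma blk_off_fuse x : (x <= d)%N ->
  blk_off fuse x = blk_off beta (blk_off alpha x).
Proof.
elim: x => [|x IH] xd; first by rewrite !blk_off0.
have -> : x.+1 = (Ordinal xd).+1 by [].
rewrite blk_offS fuseS IH ?(ltnW xd) //.
by rewrite [RHS](blk_off_split beta (leq_blk_off alpha (leqnSn x))).
Qed.

Lemma dimA_fuse : dimA fuse = dimA beta.
Proof. by rewrite -!blk_off_dimA blk_off_fuse // blk_off_dimA. Qed.

Lemma absa_fuse : absa fuse = (absa alpha + absa beta)%N.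
Proof.
have := dimA_fuse; have := dimA_absa fuse; have := dimA_absa beta.
have := dimA_absa alpha; lia.
Qed.

Definition fuse_cast : 'I_(dimA fuse) -> 'I_(dimA beta) := cast_ord dimA_fuse.

Lemma blk_of_fuse (r : 'I_(dimA fuse)) :
  blk_of fuse r = blk_of alpha (blk_of beta (fuse_cast r)).
Proof.
set q := fuse_cast r; set p := blk_of beta q.
have /andP[q_ge q_lt] := blk_ofP q.
have /andP[p_ge p_lt] := blk_ofP p.
have l_le : (blk_of alpha p <= d)%N := ltnW (ltn_ord _).
apply: blk_ofE; rewrite !blk_off_fuse //; apply/andP; split.
  exact: leq_trans (leq_blk_off beta p_ge) q_ge.
exact: leq_trans q_lt (leq_blk_off beta p_lt).
Qed.

End Fuse.

Arguments fuse_cast {d alpha} beta.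

(** * Topology *)

Definition row_sel (T : Type) (M n : nat) (sig : 'I_n -> 'I_M) (y : 'rV[T]_M) :
  'rV[T]_n := \row_j y ord0 (sig j).

Section MatrixTopology.
Variable T : topologicalType.

Lemma mx_nbhsP m n (y : 'M[T]_(m, n)) (A : set 'M[T]_(m, n)) : nbhs y A ->
  exists Q : 'I_m -> 'I_n -> set T, (forall i j, nbhs (y i j) (Q i j)) /\
    (forall z : 'M[T]_(m, n), (forall i j, Q i j (z i j)) -> A z).
Proof. by case=> Q hQ sub; exists Q. Qed.

Lemma mx_entry_continuous m n (i : 'I_m) (j : 'I_n) :
  continuous (fun z : 'M[T]_(m, n) => z i j).
Proof.
move=> y B yB; rewrite /= nbhs_simpl /=.
exists (fun i' j' => if (i' == i) && (j' == j) then B else setT).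
  move=> i' j'; case: ifP => [/andP[/eqP -> /eqP ->] //|_]; exact: filterT.
by move=> z /(_ i j); rewrite !eqxx.
Qed.

Lemma row_sel_continuous M n (sig : 'I_n -> 'I_M) :
  continuous (@row_sel T M n sig).
Proof.
move=> y B /mx_nbhsP [Q [hQ sub]]; rewrite /= nbhs_simpl /=.
have : \forall z \near y, forall ij : 'I_1 * 'I_n,
    Q ij.1 ij.2 (row_sel sig z ij.1 ij.2).
  apply: (@filter_forall _ ('I_1 * 'I_n)%type
    (fun ij z => Q ij.1 ij.2 (row_sel sig z ij.1 ij.2)) (nbhs y) _) => -[i j] /=.
  have := hQ i j; rewrite /row_sel mxE => Qy.
  have := @mx_entry_continuous 1 M ord0 (sig j) y _ Qy; rewrite /= nbhs_simpl /=.
  by apply: filterS => z; rewrite mxE.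
by apply: filterS => z Qz; apply: sub => i j; apply: (Qz (i, j)).
Qed.

End MatrixTopology.

Lemma cvg_within_map (X Y : topologicalType) (rho : X -> Y) (D : set X)
    (W : set Y) (y : X) :
  {for y, continuous rho} -> (forall x, D x -> W (rho x)) ->
  rho @ within D (nbhs y) --> within W (nbhs (rho y)).
Proof.
move=> rho_cont DW P WP.
have near_P : nbhs y (fun x => W (rho x) -> P (rho x)) := rho_cont _ WP.
rewrite /= nbhs_simpl /within /=.
by apply: filterS near_P => x Px Dx; apply/Px/DW.
Qed.

Lemma closure_eq_within (X Y : topologicalType) (W D : set X)
    (phi psi : X -> Y) (y : X) :
  hausdorff_space Y -> D `<=` W ->
  phi @ within W (nbhs y) --> phi y -> psi @ within W (nbhs y) --> psi y ->
  closure D y -> (forall x, D x -> phi x = psi x) -> phi y = psi y.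
Proof.
move=> hY DW cphi cpsi yD agree; apply: hY => A B hA hB.
have phiA : nbhs y (fun x => W x -> A (phi x)) := cphi A hA.
have psiB : nbhs y (fun x => W x -> B (psi x)) := cpsi B hB.
have [x [Dx [/= {}phiA {}psiB]]] := yD _ (filterI phiA psiB).
exists (phi x); split; first exact/phiA/DW.
by rewrite agree //; apply/psiB/DW.
Qed.

Section TopologicalField.
Variable K : topFieldType.
Hypothesis hK : is_topological_field K.

Lemma not_open_set1 (a : K) : ~ open [set a].
Proof.
case: (hK) => _ not_discrete [add_cont _] _ _ oa; apply: not_discrete => A.
rewrite openE => x Ax; rewrite /interior /=.
have shift_cvg : (fun y => y + (a - x)) @ nbhs x --> x + (a - x).
  apply: (@continuous2_cvg _ K K K (nbhs x) _ id (fun=> a - x) (fun u v => u + v));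
    [exact: add_cont (x, a - x) | exact: cvg_id | exact: cvg_cst].
have : nbhs (x + (a - x)) [set a].
  by apply: open_nbhs_nbhs; split => //; rewrite addrC subrK.
move=> /shift_cvg; rewrite /= nbhs_simpl /=; apply: filterS => y /= ya.
by have -> : y = x by apply: (addIr (a - x)); rewrite ya addrC subrK.
Qed.

Lemma open_avoid_seq (s : seq K) (O : set K) : open O -> O !=set0 ->
  exists y, O y /\ y \notin s.
Proof.
have [hH _ _ _ _] := hK.
elim: s O => [|a s IH] O oO [y Oy]; first by exists y.
have oOa : open (O `&` ~` [set a]).
  apply: openI => //; apply: closed_openC.
  exact/accessible_closed_set1/hausdorff_accessible.
have [z [Oz za]] : exists z, O z /\ z <> a.
  apply: contrapT => all_a; apply: (@not_open_set1 a).
  suff -> : [set a] = O by [].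
  have O_a w : O w -> w = a by move=> Ow; apply: contrapT => wa; apply: all_a; exists w.
  by apply/seteqP; split => [w -> | w /O_a ->]; rewrite -?(O_a y).
have [w [[Ow wa] ws]] := IH _ oOa (ex_intro _ z (conj Oz za)).
by exists w; split => //; rewrite in_cons negb_or ws andbT; apply/eqP.
Qed.

Lemma exists_inj_in_opens N (O : 'I_N -> set K) :
  (forall m, open (O m) /\ O m !=set0) ->
  exists z : 'I_N -> K, (forall m, O m (z m)) /\ injective z.
Proof.
move=> hO; suff : forall k, (k <= N)%N -> exists z : 'I_N -> K,
    (forall m, O m (z m)) /\
    forall m m' : 'I_N, (m < k)%N -> (m' < k)%N -> z m = z m' -> m = m'.
  by move=> /(_ N (leqnn N)) [z [Oz z_inj]]; exists z; split => // m m'; apply: z_inj.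
elim=> [|k IH] kN.
  by have [z Oz] := choice (fun m => proj2 (hO m)); exists z.
have [z [Oz z_inj]] := IH (ltnW kN); pose mk := Ordinal kN.
have [v [Ov vs]] := open_avoid_seq [seq z m | m : 'I_N <- enum 'I_N & (m < k)%N]
  (proj1 (hO mk)) (proj2 (hO mk)).
have vz (m : 'I_N) : (m < k)%N -> v != z m.
  move=> mk'; apply: contra vs => /eqP ->.
  by apply: map_f; rewrite mem_filter mk' mem_enum.
have neq_mk (m : 'I_N) : (m < k)%N -> (m == mk) = false.
  by move=> mk'; apply/negbTE; rewrite -val_eqE /= neq_ltn mk'.
have ltSk (m : 'I_N) : (m < k.+1)%N -> m = mk \/ (m < k)%N.
  by rewrite ltnS leq_eqVlt => /orP[/eqP mE|]; [left; apply: val_inj | right].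
exists (fun m => if m == mk then v else z m); split => [m | m m'].
  by case: eqP => [->|].
move=> /ltSk[->|mk'] /ltSk[->|mk''] //; rewrite ?eqxx ?neq_mk //.
- by move=> vE; move: (vz _ mk''); rewrite vE eqxx.
- by move=> vE; move: (vz _ mk'); rewrite vE eqxx.
- exact: z_inj.
Qed.

Lemma admissible_inj_closure N (V : set 'rV[K]_N) y :
  admissible_domain V -> V y ->
  closure [set y' | V y' /\ injective (fun m => y' ord0 m)] y.
Proof.
move=> V_adm Vy A yA.
have [O [O_ok OAV]] : exists O : 'I_N -> set K,
    (forall m, open (O m) /\ O m !=set0) /\
    (forall z : 'rV[K]_N, (forall m, O m (z ord0 m)) -> A z /\ V z).
  case: V_adm Vy => [oV Vy | [Pm [Pm_dense ->]] Vy].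
    have [Q [hQ sub]] := mx_nbhsP (filterI yA (open_nbhs_nbhs (conj oV Vy))).
    exists (fun m => interior (Q ord0 m)); split.
      move=> m; split; first exact: open_interior.
      by exists (y ord0 m); exact: nbhs_singleton (nbhs_interior (hQ ord0 m)).
    by move=> z Qz; apply: sub => i j; rewrite (ord1 i); apply: interior_subset.
  have [Q [hQ sub]] := mx_nbhsP yA.
  exists (fun m => interior (Q ord0 m) `&` interior (Pm m)); split.
    move=> m; split; first by apply: openI; apply: open_interior.
    have [x [? ?]] := Pm_dense m _ (Vy m) _ (nbhs_interior (hQ ord0 m)).
    by exists x.
  move=> z Oz; split; last by move=> m; case: (Oz m) => _ /interior_subset.
  by apply: sub => i j; rewrite (ord1 i); case: (Oz j) => /interior_subset.
have [z [Oz z_inj]] := exists_inj_in_opens O_ok.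
have [Az Vz] : A (\row_m z m) /\ V (\row_m z m) by apply: OAV => m; rewrite mxE.
by exists (\row_m z m); split => //; split => // m m'; rewrite !mxE => /z_inj.
Qed.

End TopologicalField.

Section UsubFacts.
Variable K : topFieldType.

Lemma Usub_section_row n (beta : 'I_n -> nat) (W : set 'rV[K]_n)
    (y : 'rV[K]_(dimA beta)) (c1 : {ffun 'I_n -> 'I_(dimA beta)}) :
  Usub beta W y -> is_section (blk_of beta) c1 -> W (\row_p y ord0 (c1 p)).
Proof.
move=> Wy /sectionP sec1; have := Wy (fun p => inord (c1 p - blk_off beta p)).
by congr W; apply/rowP => p; rewrite !mxE /ent blk_inord.
Qed.

Lemma Usub_prod n (alpha : 'I_n -> nat) (P : 'I_n -> set K) :
  Usub alpha [set x | forall i, P i (x ord0 i)] =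
  [set y | forall p, P (blk_of alpha p) (y ord0 p)].
Proof.
apply/seteqP; split => y /= Py; last first.
  by move=> t i; rewrite mxE /ent; have := Py (blk (t i)); rewrite blk_of_blk.
move=> p; pose t (i : 'I_n) : 'I_(alpha i).+1 :=
  inord (if i == blk_of alpha p then (p - blk_off alpha i)%N else 0%N).
by have := Py t (blk_of alpha p); rewrite mxE /ent /t eqxx blk_inord.
Qed.

Lemma Usub_open n (alpha : 'I_n -> nat) (W : set 'rV[K]_n) :
  open W -> open (Usub alpha W).
Proof.
move=> oW; rewrite openE => y Wy; rewrite /interior.
have : \forall z \near y, forall t : {dffun forall i : 'I_n, 'I_(alpha i).+1},
    W (\row_i ent z (t i)).
  apply: (@filter_forall _ _ (fun (t : {dffun forall i, 'I_(alpha i).+1}) z =>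
    W (\row_i ent z (t i))) (nbhs y) _) => t.
  have Wt : nbhs (row_sel (fun i => blk (t i)) y) W.
    by apply: open_nbhs_nbhs; split => //; apply: Wy.
  exact: row_sel_continuous Wt.
apply: filterS => z Wz t.
by have := Wz [ffun i => t i]; congr W; apply/rowP => i; rewrite !mxE ffunE.
Qed.

Lemma admissible_Usub n (alpha : 'I_n -> nat) (W : set 'rV[K]_n) :
  admissible_domain W -> admissible_domain (Usub alpha W).
Proof.
case=> [oW | [P [P_dense ->]]]; first by left; apply: Usub_open.
by right; exists (fun p => P (blk_of alpha p)); rewrite Usub_prod.
Qed.

End UsubFacts.

Lemma cvg_big (X : Type) (G : set_system X) (V : topologicalType)
    (op : V -> V -> V) (idx : V) (I : Type) (r : seq I) (P : pred I)
    (u : I -> X -> V) (a : I -> V) :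
  Filter G -> continuous (fun v : V * V => op v.1 v.2) ->
  (forall i, P i -> u i @ G --> a i) ->
  (fun x => \big[op/idx]_(i <- r | P i) u i x) @ G --> \big[op/idx]_(i <- r | P i) a i.
Proof.
move=> G_filter op_cont u_cvg; elim: r => [|i r IH].
  by rewrite big_nil; under eq_fun do rewrite big_nil; exact: cvg_cst.
rewrite big_cons; under eq_fun do rewrite big_cons.
case: (boolP (P i)) => Pi; last exact: IH.
exact: (@continuous2_cvg _ V V V G G_filter _ _ op _ _ (op_cont (a i, _))
  (u_cvg i Pi) IH).
Qed.

Section Limits.
Variables (K : topFieldType) (F : lmodType K) (tF : Topological.axioms_ F).
Hypotheses (hK : is_topological_field K) (hF : is_tvs tF).
Local Notation TF := (topF tF).
Variables (X : Type) (G : set_system X).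
Hypothesis G_filter : Filter G.

Lemma cvgK_sub (u v : X -> K) a b : u @ G --> a -> v @ G --> b ->
  (fun x => u x - v x) @ G --> a - b.
Proof.
have [_ _ [add_cont _] opp_cont _] := hK; move=> u_cvg v_cvg.
exact: (@continuous2_cvg _ K K K G G_filter _ _ +%R _ _ (add_cont (a, - b)) u_cvg
  (@continuous_cvg _ K K G G_filter _ -%R _ (opp_cont b) v_cvg)).
Qed.

Lemma cvgK_inv (u : X -> K) a : a != 0 -> u @ G --> a ->
  (fun x => (u x)^-1) @ G --> a^-1.
Proof.
have [_ _ _ _ inv_cont] := hK; move=> a0.
exact: (@continuous_cvg _ K K G G_filter u _ _ (inv_cont a a0)).
Qed.

Lemma cvgK_prod (I : Type) (r : seq I) (P : pred I) (u : I -> X -> K) (a : I -> K) :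
  (forall i, P i -> u i @ G --> a i) ->
  (fun x => \prod_(i <- r | P i) u i x) @ G --> \prod_(i <- r | P i) a i.
Proof. by have [_ _ [_ mul_cont] _ _] := hK; apply: cvg_big. Qed.

Lemma cvgF_sum (I : Type) (r : seq I) (P : pred I) (u : I -> X -> TF) (a : I -> TF) :
  (forall i, P i -> u i @ G --> a i) ->
  (fun x => (\sum_(i <- r | P i) u i x : TF)) @ G --> (\sum_(i <- r | P i) a i : TF).
Proof. by have [_ add_cont _] := hF; apply: cvg_big. Qed.

Lemma cvgF_scale (u : X -> K) (v : X -> TF) a (b : TF) : u @ G --> a -> v @ G --> b ->
  (fun x => (u x *: v x : TF)) @ G --> (a *: b : TF).
Proof.
have [_ _ scale_cont] := hF.
exact: (@continuous2_cvg _ K TF TF G G_filter u v ( *:%R) a b (scale_cont (a, b))).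
Qed.

End Limits.

Lemma sds_continuous (K : topFieldType) (F : lmodType K) (tF : Topological.axioms_ F)
    n (beta : 'I_n -> nat) (W : set 'rV[K]_n) (g : 'rV[K]_n -> F) :
  is_topological_field K -> is_tvs tF ->
  {within W, continuous (g : _ -> topF tF)} ->
  {within Udist beta W, continuous ((fun x => sds g x) : _ -> topF tF)}.
Proof.
move=> hK hF /subspace_continuousP g_cont; apply/subspace_continuousP => y [Wy y_dist].
apply: cvgF_sum => // t _; apply: cvgF_scale => //.
  apply: cvgK_prod => // l _; apply: cvgK_prod => // k kt.
  apply: cvgK_inv => //; first by rewrite subr_eq0 y_dist // eq_sym.
  by apply: cvgK_sub => //; apply: cvg_within_filter; apply: mx_entry_continuous.
pose rho := row_sel (fun l => blk (t l)) : 'rV[K]_(dimA beta) -> 'rV[K]_n.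
apply: (@cvg_comp _ _ _ rho (g : _ -> topF tF)); last exact: g_cont (Wy t).
apply: cvg_within_map => [|x [Wx _]]; [exact: row_sel_continuous | exact: Wx t].
Qed.

Section RowSelLinear.
Variables (K : fieldType) (M n : nat) (sig : 'I_n -> 'I_M).

Lemma row_selZ (t : K) (x : 'rV[K]_M) : row_sel sig (t *: x) = t *: row_sel sig x.
Proof. by apply/rowP => j; rewrite !mxE. Qed.

Lemma row_selB (x y : 'rV[K]_M) : row_sel sig (y - x) = row_sel sig y - row_sel sig x.
Proof. by apply/rowP => j; rewrite !mxE. Qed.

Lemma row_sel0 : row_sel sig (0 : 'rV[K]_M) = 0.
Proof. by apply/rowP => j; rewrite !mxE. Qed.

End RowSelLinear.

Section Holder.
Variables (K : topFieldType) (F : lmodType K) (tF : Topological.axioms_ F).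
Variables (R : realType) (av : K -> R) (sigma : R).

Lemma C0s_row_sel M n (sig : 'I_n -> 'I_M) (V : set 'rV[K]_M) (W : set 'rV[K]_n)
    (h : 'rV[K]_n -> F) :
  (forall y, V y -> W (row_sel sig y)) -> C0s tF av W h sigma ->
  C0s tF av V (fun y => h (row_sel sig y)) sigma.
Proof.
move=> VW h_hold x0 Vx0 q q_gauge.
have [p [[p_ge0 pZ p_nbhs] [N [N_nbhs hN]]]] := h_hold _ (VW _ Vx0) q q_gauge.
exists (fun y => p (row_sel sig y)); split.
  split => // [t x | r r_gt0]; first by rewrite row_selZ pZ.
  have sel0_cvg : row_sel sig @ (0 : 'rV[K]_M) --> (0 : 'rV[K]_n).
    by rewrite -(@row_sel0 K M n sig); exact: row_sel_continuous.
  exact: sel0_cvg _ (p_nbhs r r_gt0).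
exists (row_sel sig @^-1` N); split; first exact: row_sel_continuous N_nbhs.
by move=> x y Vx Vy Nx Ny; rewrite row_selB; apply: hN => //; apply: VW.
Qed.

Lemma eq_C0s m (V : set 'rV[K]_m) (h1 h2 : 'rV[K]_m -> F) :
  (forall y, V y -> h1 y = h2 y) -> C0s tF av V h2 sigma -> C0s tF av V h1 sigma.
Proof.
move=> h12 h2_hold x0 Vx0 q q_gauge.
have [p [p_gauge [N [N_nbhs hN]]]] := h2_hold x0 Vx0 q q_gauge.
exists p; split => //; exists N; split => // x y Vx Vy Nx Ny.
by rewrite !h12 //; apply: hN.
Qed.

End Holder.

Section CSDSFacts.
Variables (K : topFieldType) (F : lmodType K) (tF : Topological.axioms_ F).

Lemma CSDS_ext k n (V : set 'rV[K]_n) h : CSDS tF k V h ->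
  forall gm : 'I_n -> nat, (0 < absa gm <= k)%N -> exists G, is_ext tF gm V h G.
Proof.
elim: k => [|k IH] hk gm /andP[gm_gt0 gm_le]; first by move: gm_gt0 gm_le; lia.
case: hk => hk ext_k; case: (ltnP (absa gm) k.+1) => gm_lt.
  by apply: IH; rewrite ?gm_gt0.
by apply: ext_k; apply/eqP; rewrite eqn_leq gm_le gm_lt.
Qed.

Lemma CSDS_intro m n (V : set 'rV[K]_n) h :
  {within V, continuous (h : _ -> topF tF)} ->
  (forall gm : 'I_n -> nat, (0 < absa gm <= m)%N -> exists G, is_ext tF gm V h G) ->
  CSDS tF m V h.
Proof.
move=> h_cont; elim: m => [//|m IH] h_ext; split.
  by apply: IH => gm /andP[gm_gt0 gm_le]; apply: h_ext; rewrite gm_gt0 leqW.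
by move=> gm gm_eq; apply: h_ext; rewrite gm_eq leqnn.
Qed.

End CSDSFacts.

(** * Extensions of iterated divided differences *)

Lemma Udist_inj (K : topFieldType) n (gm : 'I_n -> nat) (W : set 'rV[K]_n)
    (y : 'rV[K]_(dimA gm)) :
  Usub gm W y -> injective (fun r => y ord0 r) -> Udist gm W y.
Proof.
move=> Wy y_inj; split => // i j j' jj'.
by apply/eqP => /y_inj /blk_inj jE; rewrite jE eqxx in jj'.
Qed.

Definition fuse_row (T : Type) d (alpha : 'I_d -> nat)
    (beta : 'I_(dimA alpha) -> nat) (y : 'rV[T]_(dimA beta)) :
  'rV[T]_(dimA (fuse beta)) := row_sel (fuse_cast beta) y.

Section FuseRow.
Variables (K : topFieldType) (d : nat) (alpha : 'I_d -> nat).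
Variables (beta : 'I_(dimA alpha) -> nat) (U : set 'rV[K]_d).
Variable y : 'rV[K]_(dimA beta).
Hypothesis Uy : Usub beta (Usub alpha U) y.

Lemma Usub_fuse_row : Usub (fuse beta) U (fuse_row y).
Proof.
move=> u; pose r l := fuse_cast beta (blk (u l)).
have blk_of_r l : blk_of alpha (blk_of beta (r l)) = l by rewrite -blk_of_fuse blk_of_blk.
pose c1 : {ffun 'I_(dimA alpha) -> 'I_(dimA beta)} := [ffun p =>
  if blk_of beta (r (blk_of alpha p)) == p then r (blk_of alpha p)
  else blk (ord0 : 'I_(beta p).+1)].
have sec1 : is_section (blk_of beta) c1.
  by apply/sectionP => p; rewrite ffunE; case: ifP => [/eqP //|_]; rewrite blk_of_blk.
have := Usub_section_row Uy sec1 (fun l => inord (blk_of beta (r l) - blk_off alpha l)).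
congr U; apply/rowP => l; rewrite !mxE /ent mxE (blk_inord (blk_of_r l)).
by rewrite ffunE blk_of_r eqxx /fuse_row /row_sel mxE.
Qed.

Hypothesis y_inj : injective (fun r => y ord0 r).

Lemma Udist_fuse_row : Udist (fuse beta) U (fuse_row y).
Proof.
apply: Udist_inj Usub_fuse_row _ => r r'; rewrite !mxE => /y_inj.
exact: cast_ord_inj.
Qed.

Lemma Udist_section_row (c1 : {ffun 'I_(dimA alpha) -> 'I_(dimA beta)}) :
  is_section (blk_of beta) c1 -> Udist alpha U (\row_p y ord0 (c1 p)).
Proof.
move=> sec1; apply: Udist_inj (Usub_section_row Uy sec1) _ => p p'.
by rewrite !mxE => /y_inj /(section_inj sec1).
Qed.

Lemma sds_sds (F : lmodType K) (f : 'rV[K]_d -> F) (g : 'rV[K]_(dimA alpha) -> F) :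
  (forall x, Udist alpha U x -> g x = sds f x) ->
  sds g y = sds f (fuse_row y).
Proof.
move=> g_sds; rewrite !sds_divdiff.
transitivity (\sum_(c1 | is_section (blk_of beta) c1)
    dd_weight (blk_of beta) (fun r => y ord0 r) c1 *:
    divdiff (blk_of alpha) f (fun p => y ord0 (c1 p))).
  apply: eq_bigr => c1 sec1; rewrite g_sds; last exact: Udist_section_row.
  rewrite sds_divdiff.
  by congr (_ *: divdiff _ _ _); apply: funext => p; rewrite mxE.
have blk_of_surj p : exists r, blk_of beta r = p.
  by exists (blk (ord0 : 'I_(beta p).+1)); rewrite blk_of_blk.
have cast_bij : bijective (fuse_cast beta).
  by exists (cast_ord (esym (dimA_fuse beta))); [apply: cast_ordK | apply: cast_ordKV].
rewrite (divdiff_comp _ y_inj blk_of_surj) -(divdiff_reindex _ _ _ cast_bij).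
by congr divdiff; apply: funext => r; rewrite ?blk_of_fuse // mxE.
Qed.

End FuseRow.

Section Extension.
Variables (K : topFieldType) (F : lmodType K) (tF : Topological.axioms_ F).
Hypotheses (hK : is_topological_field K) (hF : is_tvs tF).
Local Notation TF := (topF tF).
Variables (d : nat) (U : set 'rV[K]_d) (f : 'rV[K]_d -> F).
Hypothesis U_adm : admissible_domain U.
Variables (alpha : 'I_d -> nat) (beta : 'I_(dimA alpha) -> nat).
Variables (g : 'rV[K]_(dimA alpha) -> F) (G : 'rV[K]_(dimA (fuse beta)) -> F).
Hypotheses (g_ext : is_ext tF alpha U f g) (G_ext : is_ext tF (fuse beta) U f G).

Let Uab := Usub beta (Usub alpha U).
Let inj_pts := [set y | Uab y /\ injective (fun r => y ord0 r)].

Let hausdorffF : hausdorff_space TF. Proof. by case: hF. Qed.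

Let inj_pts_closure y : Uab y -> closure inj_pts y.
Proof. by apply: admissible_inj_closure => //; do 2 apply: admissible_Usub. Qed.

Let G_fuse_cont : {within Uab, continuous ((fun y => G (fuse_row y)) : _ -> TF)}.
Proof.
have [/subspace_continuousP G_cont _] := G_ext.
apply/subspace_continuousP => y Uy.
apply: (@cvg_comp _ _ _ (@fuse_row K d alpha beta) (G : _ -> TF) _ _ _ _
  (G_cont _ (Usub_fuse_row Uy))).
by apply: cvg_within_map => [|x]; [exact: row_sel_continuous | exact: Usub_fuse_row].
Qed.

Lemma is_ext_fuse : is_ext tF beta (Usub alpha U) g (fun y => G (fuse_row y)).
Proof.
have [g_cont g_sds] := g_ext; have [_ G_sds] := G_ext.
split => // y [Uy y_dist].
apply: (@closure_eq_within _ TF (Udist beta (Usub alpha U)) inj_pts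
  (fun y => G (fuse_row y)) (fun y => sds g y) y hausdorffF).
- by move=> x [Ux x_inj]; apply: Udist_inj.
- move/subspace_continuousP : G_fuse_cont => /(_ _ Uy).
  by apply: cvg_trans; apply: cvg_app; apply: within_subset => x [].
- exact: (subspace_continuousP _ _).1 (sds_continuous hK hF g_cont) y (conj Uy y_dist).
- exact: inj_pts_closure.
- move=> x [Ux x_inj] /=; rewrite G_sds; last exact: Udist_fuse_row Ux x_inj.
  exact/esym/(sds_sds Ux x_inj g_sds).
Qed.

Lemma is_ext_fuse_eq h : is_ext tF beta (Usub alpha U) g h ->
  forall y, Uab y -> h y = G (fuse_row y).
Proof.
move=> [/subspace_continuousP h_cont h_sds] y Uy.
have [_ GF_sds] := is_ext_fuse.
apply: (@closure_eq_within _ TF Uab inj_pts h (fun y => G (fuse_row y)) y hausdorffF).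
- by move=> x [].
- exact: h_cont.
- by move/subspace_continuousP : G_fuse_cont; apply.
- exact: inj_pts_closure.
- by move=> x [Ux x_inj]; rewrite h_sds ?GF_sds //; apply: Udist_inj.
Qed.

End Extension.

Lemma CSDS_Usub (K : topFieldType) (F : lmodType K) (tF : Topological.axioms_ F)
    d (U : set 'rV[K]_d) (f : 'rV[K]_d -> F) k (alpha : 'I_d -> nat) g :
  is_topological_field K -> is_tvs tF -> admissible_domain U ->
  CSDS tF k U f -> (absa alpha <= k)%N -> is_ext tF alpha U f g ->
  CSDS tF (k - absa alpha) (Usub alpha U) g.
Proof.
move=> hK hF U_adm f_k alpha_le g_ext; apply: CSDS_intro; first by case: g_ext.
move=> beta /andP[beta_gt0 beta_le].
have [G G_ext] : exists G, is_ext tF (fuse beta) U f G.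
  by apply: CSDS_ext f_k _ _; rewrite absa_fuse; apply/andP; split; lia.
by exists (fun y => G (fuse_row y)); exact (is_ext_fuse hK hF U_adm g_ext G_ext).
Qed.

Lemma ord_absa0 n (beta : 'I_n -> nat) : absa beta = 0%N ->
  forall p (j : 'I_(beta p).+1), j = ord0.
Proof.
move=> beta0 p j; apply: val_inj => /=; have := ltn_ord j.
by move: beta0; rewrite /absa (bigD1 p) //=; lia.
Qed.

Lemma is_ext_absa0 (K : topFieldType) (F : lmodType K) (tF : Topological.axioms_ F)
    n (beta : 'I_n -> nat) (W : set 'rV[K]_n) (g : 'rV[K]_n -> F) h :
  absa beta = 0%N -> is_ext tF beta W g h ->
  forall y, Usub beta W y -> h y = g (row_sel (fun p => blk (ord0 : 'I_(beta p).+1)) y).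
Proof.
move=> /ord_absa0 j0 [_ h_sds] y Wy.
rewrite h_sds; last by split => // p j j'; rewrite (j0 _ j) (j0 _ j') eqxx.
pose t0 : {dffun forall p, 'I_(beta p).+1} := [ffun p => ord0].
rewrite /sds (big_pred1 t0) => [|t]; last first.
  by apply/esym/eqP/ffunP => p; rewrite ffunE (j0 _ (t p)).
rewrite big1 ?scale1r => [|l _]; last first.
  by apply: big_pred0 => j; rewrite ffunE (j0 _ j) eqxx.
by congr g; apply/rowP => l; rewrite !mxE ffunE.
Qed.

Lemma C0s_Usub (K : topFieldType) (F : lmodType K) (tF : Topological.axioms_ F)
    (R : realType) (av : K -> R) (sigma : R)
    d (U : set 'rV[K]_d) (f : 'rV[K]_d -> F) k (alpha : 'I_d -> nat) g
    (beta : 'I_(dimA alpha) -> nat) h :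
  is_topological_field K -> is_tvs tF -> admissible_domain U ->
  CSDSs tF av k sigma U f -> (absa alpha <= k)%N -> is_ext tF alpha U f g ->
  (absa beta <= k - absa alpha)%N -> is_ext tF beta (Usub alpha U) g h ->
  C0s tF av (Usub beta (Usub alpha U)) h sigma.
Proof.
move=> hK hF U_adm [f_k f_hold] alpha_le g_ext beta_le h_ext.
have [beta0 | beta_gt0] := posnP (absa beta).
  apply: eq_C0s (is_ext_absa0 beta0 h_ext) _.
  by apply: C0s_row_sel (f_hold _ alpha_le _ g_ext) => y; apply.
have [G G_ext] : exists G, is_ext tF (fuse beta) U f G.
  by apply: CSDS_ext f_k _ _; rewrite absa_fuse; apply/andP; split; lia.
apply: eq_C0s (is_ext_fuse_eq hK hF U_adm g_ext G_ext h_ext) _.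
apply: C0s_row_sel (f_hold _ _ G G_ext) => [y /Usub_fuse_row //|].
by rewrite absa_fuse; lia.
Qed.

Unset Implicit Arguments.

Theorem lemma2p4 (K : topFieldType) (d : nat) (F : lmodType K)
    (tF : Topological.axioms_ F) (U : set 'rV[K]_d) (f : 'rV[K]_d -> F) :
  is_topological_field K -> is_tvs tF -> (0 < d)%N -> admissible_domain U ->
  (forall k : nat, CSDS tF k U f ->
     forall alpha : 'I_d -> nat, (absa alpha <= k)%N ->
     forall g, is_ext tF alpha U f g ->
       CSDS tF (k - absa alpha) (Usub alpha U) g) /\
  (forall (R : realType) (av : K -> R), is_valued av ->
   forall (k : nat) (sigma : R), 0 < sigma -> CSDSs tF av k sigma U f ->
     forall alpha : 'I_d -> nat, (absa alpha <= k)%N ->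
     forall g, is_ext tF alpha U f g ->
       CSDSs tF av (k - absa alpha) sigma (Usub alpha U) g).
Proof.
(* Neither d > 0, nor the absolute value, nor sigma > 0 is needed. *)
move=> hK hF _ U_adm; split=> [k f_k alpha alpha_le g g_ext|].
  exact (CSDS_Usub hK hF U_adm f_k alpha_le g_ext).
move=> R av _ k sigma _ f_ks alpha alpha_le g g_ext; split.
  exact (CSDS_Usub hK hF U_adm f_ks.1 alpha_le g_ext).
move=> beta beta_le h.
exact: (C0s_Usub hK hF U_adm f_ks alpha_le g_ext beta_le).
Qed.
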